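(* Let $G$ be a graph on $n$ vertices with at least two vertex-disjoint edges. Then $\Gamma(G)+1 \le d_0(G) \le \min\{n-1, \Gamma(G)+\gamma(G)\}$.
   Context: All graphs are finite and simple. A set $S \subseteq V(G)$ is a dominating set of $G$ if every vertex of $V(G)\setminus S$ is adjacent to a vertex of $S$; it is a minimal dominating set if no proper subset of it is a dominating set. $\gamma(G)$ is the minimum cardinality of a dominating set of $G$, and $\Gamma(G)$ is the maximum cardinality of a minimal dominating set of $G$. For an integer $k \ge \gamma(G)$, the $k$-dominating graph $D_k(G)$ is the graph whose vertices are the dominating sets of $G$ of cardinality at most $k$, with two such sets $A,B$ adjacent if and only if their symmetric difference $(A\setminus B)\cup(B\setminus A)$ consists of exactly one vertex of $G$. $d_0(G)$ denotes the smallest integer $d \ge \gamma(G)$ such that $D_k(G)$ is connected for every integer $k \ge d$. *)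

(* A simple graph is a symmetric irreflexive relation e on a finType T. *)
From mathcomp Require Import all_boot.
Set Implicit Arguments. Unset Strict Implicit. Unset Printing Implicit Defensive.

Section Dom.
Variables (T : finType) (e : rel T).

Definition dominating (S : {set T}) : bool :=
  [forall v, (v \notin S) ==> [exists u in S, e u v]].

Definition minimal_dominating (S : {set T}) : bool :=
  dominating S && [forall B : {set T}, (B \proper S) ==> ~~ dominating B].

(* gamma(G): minimum cardinality of a dominating set (V(G) itself dominates) *)
Definition gamma_dom : nat :=
  \big[minn/#|T|]_(S : {set T} | dominating S) #|S|.

Definition Gamma_dom : nat :=
  \max_(S : {set T} | minimal_dominating S) #|S|.

Definition symdiff (A B : {set T}) : {set T} := (A :\: B) :|: (B :\: A).

Definition Dk_vertex (k : nat) (A : {set T}) : bool :=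
  dominating A && (#|A| <= k).

Definition Dk_edge (k : nat) : rel {set T} :=
  fun A B => [&& Dk_vertex k A, Dk_vertex k B & #|symdiff A B| == 1].

Definition Dk_connected (k : nat) : Prop :=
  forall A B : {set T}, Dk_vertex k A -> Dk_vertex k B -> connect (Dk_edge k) A B.

Definition d0_prop (d : nat) : Prop :=
  gamma_dom <= d /\ (forall k, d <= k -> Dk_connected k).

Definition is_d0 (d : nat) : Prop :=
  d0_prop d /\ (forall d', d0_prop d' -> d <= d').

End Dom.

From mathcomp Require Import all_boot.
From Stdlib Require Import Classical.
Set Implicit Arguments. Unset Strict Implicit. Unset Printing Implicit Defensive.

(* Lower bound: a minimal dominating set S with |S| = Gamma(G) is an isolated
   vertex of D_Gamma(G), since deleting a vertex breaks domination and adding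
   one exceeds the size bound.  As soon as G has an edge there is a second
   minimal dominating set (a minimal one inside the complement of S, enlarged
   by the isolated vertices, which dominates by Ore's private-neighbour
   argument), so D_Gamma(G) is disconnected and d_0(G) > Gamma(G).

   Upper bounds: in D_k(G) any dominating set can shrink, one vertex at a
   time, to any dominating subset of it.  For k >= Gamma + gamma every vertex A
   of D_k(G) shrinks to a minimal dominating M, and M reaches a fixed minimum
   dominating set D through M u D.  For k >= n - 1 every vertex reaches some
   V - x, and the two disjoint edges link all these sets V - x to V - a
   through common dominating subsets V - x - y. *)

Lemma bigmin_le_cond (I : finType) (P : pred I) (F : I -> nat) (m : nat) (i0 : I) :
  P i0 -> \big[minn/m]_(i | P i) F i <= F i0.
Proof.
move=> Pi0; rewrite unlock; elim: (index_enum I) (mem_index_enum i0) => // j r IH.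
rewrite inE /= => /predU1P [<-|/IH le]; first by rewrite Pi0 geq_minl.
by case: ifP => // _; rewrite geq_min le orbT.
Qed.

Section Domination.
Variables (T : finType) (e : rel T).

Lemma dominatingP (S : {set T}) :
  reflect (forall v, v \notin S -> exists2 u, u \in S & e u v) (dominating e S).
Proof.
apply: (iffP forallP) => [dS v vS | dS v].
  by have /existsP [u /andP [uS euv]] := implyP (dS v) vS; exists u.
by apply/implyP => /dS [u uS euv]; apply/existsP; exists u; rewrite uS.
Qed.

Lemma dominating_sup (C A : {set T}) :
  C \subset A -> dominating e C -> dominating e A.
Proof.
move=> sCA /dominatingP dC; apply/dominatingP => v vA.
have [|u uC euv] := dC v; first by apply: contra vA; apply: (subsetP sCA).
by exists u; first exact: (subsetP sCA).
Qed.

Lemma dominating_setT : dominating e [set: T].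
Proof. by apply/dominatingP => v; rewrite inE. Qed.

Lemma minimal_dominatingW (S : {set T}) :
  minimal_dominating e S -> dominating e S.
Proof. by case/andP. Qed.

Lemma minimal_dominating_proper (S B : {set T}) :
  minimal_dominating e S -> B \proper S -> ~~ dominating e B.
Proof. by case/andP => _ /forallP /(_ B) /implyP. Qed.

(* Every dominating set contains a minimal dominating set: take a dominating
   subset of least cardinality. *)
Lemma exists_minimal_dominating (A : {set T}) :
  dominating e A -> exists2 M : {set T}, M \subset A & minimal_dominating e M.
Proof.
move=> dA; pose dom_sub (B : {set T}) := (B \subset A) && dominating e B.
have [|M /andP [sMA dM] Mmin] := @arg_minnP _ A dom_sub (fun B => #|B|).
  by rewrite /dom_sub subxx.
exists M => //; rewrite /minimal_dominating dM; apply/forallP => B; apply/implyP => pBM.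
apply/negP => dB; have := Mmin B; rewrite /dom_sub (subset_trans (proper_sub pBM) sMA) dB.
by move=> /(_ isT); rewrite leqNgt proper_card.
Qed.

Lemma gamma_dom_min (S : {set T}) : dominating e S -> gamma_dom e <= #|S|.
Proof. exact: bigmin_le_cond. Qed.

Lemma gamma_dom_attained : exists2 D : {set T}, dominating e D & #|D| = gamma_dom e.
Proof.
rewrite /gamma_dom; apply: (big_ind (fun m => exists2 D : {set T}, dominating e D & #|D| = m)).
- by exists [set: T]; rewrite ?cardsT ?dominating_setT.
- by move=> m1 m2 [D1 dD1 <-] [D2 dD2 <-]; rewrite /minn; case: ifP; [exists D1 | exists D2].
- by move=> S dS; exists S.
Qed.

(* Gamma(G) is an upper bound for minimal dominating sets, and it is attained
   (a minimal dominating set exists, so the maximum is not over nothing). *)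
Lemma Gamma_dom_max (S : {set T}) : minimal_dominating e S -> #|S| <= Gamma_dom e.
Proof. exact: leq_bigmax_cond. Qed.

Lemma Gamma_dom_attained :
  exists2 S : {set T}, minimal_dominating e S & #|S| = Gamma_dom e.
Proof.
have [M _ mM] := exists_minimal_dominating dominating_setT.
have [|S mS maxS] := @eq_bigmax_cond _ (minimal_dominating e) (fun S => #|S|).
  by apply/card_gt0P; exists M.
by exists S; last exact: esym maxS.
Qed.

End Domination.

Section Reconfiguration.
Variables (T : finType) (e : rel T).

Lemma symdiffC (A B : {set T}) : symdiff A B = symdiff B A.
Proof. by rewrite /symdiff setUC. Qed.

Lemma Dk_edge_sym (k : nat) : symmetric (Dk_edge e k).
Proof. by move=> A B; rewrite /Dk_edge symdiffC andbCA. Qed.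

Lemma Dk_connect_sym (k : nat) : connect_sym (Dk_edge e k).
Proof. exact: sym_connect_sym (@Dk_edge_sym k). Qed.

Lemma symdiffD1 (A : {set T}) (x : T) : x \in A -> symdiff A (A :\ x) = [set x].
Proof.
move=> xA; apply/setP => y; rewrite /symdiff !inE.
case: (eqVneq y x) => [->|_] /=; first by rewrite xA.
by case: (y \in A).
Qed.

Lemma Dk_edge_delete (k : nat) (A : {set T}) (x : T) :
  x \in A -> dominating e (A :\ x) -> #|A| <= k -> Dk_edge e k A (A :\ x).
Proof.
move=> xA dAx kA; rewrite /Dk_edge /Dk_vertex symdiffD1 // cards1 eqxx kA dAx.
rewrite (dominating_sup (subsetDl A [set x]) dAx) /=.
by rewrite (leq_trans _ kA) // subset_leq_card // subsetDl.
Qed.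

Lemma symdiff1_proper (A B : {set T}) (y : T) :
  symdiff A B = [set y] -> y \in A -> B \proper A.
Proof.
move=> hy yA; have only_y z : z \in symdiff A B -> z = y by rewrite hy inE => /eqP.
have yB : y \notin B.
  by apply: contraL (set11 y) => yB; rewrite -hy /symdiff !inE yA yB.
rewrite properE; apply/andP; split; last by apply/subsetPn; exists y.
apply/subsetP => z zB; apply/negPn/negP => zA.
have zy : z = y by apply: only_y; rewrite /symdiff !inE zA zB.
by rewrite zy (negbTE yB) in zB.
Qed.

(* Shrinking: in D_k(G) a set A of size at most k reaches every dominating
   subset C, deleting the vertices of A - C one at a time (every
   intermediate set contains C, so it still dominates). *)
Lemma connect_down (k : nat) (C A : {set T}) :
  C \subset A -> dominating e C -> #|A| <= k -> connect (Dk_edge e k) A C.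
Proof.
have [n] := ubnP #|A|; elim: n A => // n IH A /ltnSE szA sCA dC kA.
have [<-|neCA] := eqVneq C A; first exact: connect0.
have /subsetPn [x xA xC] : ~~ (A \subset C).
  by apply: contra neCA => sAC; rewrite eqEsubset sCA sAC.
have sCAx : C \subset A :\ x.
  by apply/subsetP => y yC; rewrite !inE (subsetP sCA) // andbT; apply: contraNneq xC => <-.
have ltAx : #|A :\ x| < #|A| by rewrite proper_card // properD1.
apply: connect_trans (connect1 (Dk_edge_delete xA (dominating_sup sCAx dC) kA)) _.
exact: IH (leq_trans ltAx szA) sCAx dC (leq_trans (ltnW ltAx) kA).
Qed.

Lemma connect_common_subset (k : nat) (C A B : {set T}) :
  C \subset A -> C \subset B -> dominating e C -> #|A| <= k -> #|B| <= k ->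
  connect (Dk_edge e k) A B.
Proof.
move=> sCA sCB dC kA kB; apply: connect_trans (connect_down sCA dC kA) _.
by rewrite Dk_connect_sym connect_down.
Qed.

Lemma connect_common_superset (k : nat) (U A B : {set T}) :
  A \subset U -> B \subset U -> dominating e A -> dominating e B -> #|U| <= k ->
  connect (Dk_edge e k) A B.
Proof.
move=> sAU sBU dA dB kU; apply: connect_trans (connect_down sBU dB kU).
by rewrite Dk_connect_sym connect_down.
Qed.

Lemma Dk_connected_hub (k : nat) (H : {set T}) :
  (forall A, Dk_vertex e k A -> connect (Dk_edge e k) A H) -> Dk_connected e k.
Proof.
move=> toH A B vA vB; apply: connect_trans (toH A vA) _.
by rewrite Dk_connect_sym toH.
Qed.

End Reconfiguration.

Section LowerBound.
Variables (T : finType) (e : rel T).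

(* A minimal dominating set S with k <= |S| is an isolated vertex of D_k(G):
   a neighbour would be S minus a vertex, which does not dominate, or S plus
   a vertex, which is too large. *)
Lemma minimal_dominating_Dk_isolated (k : nat) (S B : {set T}) :
  minimal_dominating e S -> k <= #|S| -> ~~ Dk_edge e k S B.
Proof.
move=> mS kS; apply/negP => /and3P [_ /andP [dB kB] /cards1P [y hy]].
have [yS|yS] := boolP (y \in S).
  by have := minimal_dominating_proper mS (symdiff1_proper hy yS); rewrite dB.
have yB : y \in B by have := set11 y; rewrite -hy /symdiff !inE (negbTE yS) andbF /=.
rewrite symdiffC in hy; have := proper_card (symdiff1_proper hy yB).
by rewrite ltnNge (leq_trans kB kS).
Qed.

Hypotheses (e_sym : symmetric e) (e_irr : irreflexive e).

Definition isolated (v : T) : bool := [forall u, ~~ e v u].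

(* Ore's private-neighbour argument: a non-isolated vertex v of a minimal
   dominating set S has a neighbour outside S.  Indeed S - v does not
   dominate some w; either w = v, and then no neighbour of v lies in S, or w
   is outside S and v is its only neighbour in S. *)
Lemma outside_neighbour (S : {set T}) (v : T) :
  minimal_dominating e S -> v \in S -> ~~ isolated v -> exists2 w, w \notin S & e v w.
Proof.
move=> mS vS /forallPn [u /negbNE evu].
have /forallPn [w] := minimal_dominating_proper mS (properD1 vS).
rewrite negb_imply !inE negb_and negbK => /andP [wSv /existsPn noS].
have [wv|nwv] := eqVneq w v.
  exists u => //; apply: contraT => /negbNE uS; have := noS u.
  by rewrite !inE uS wv e_sym evu !andbT negbK => /eqP uv; rewrite uv e_irr in evu.
have wS : w \notin S by rewrite (negbTE nwv) in wSv.
have [s sS esw] := dominatingP _ _ (minimal_dominatingW mS) w wS.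
have [sv|nsv] := eqVneq s v; first by exists w; rewrite -?sv.
by have := noS s; rewrite !inE nsv sS esw.
Qed.

Lemma complement_dominating (S : {set T}) :
  minimal_dominating e S -> dominating e (~: S :|: [set v | isolated v]).
Proof.
move=> mS; apply/dominatingP => v; rewrite !inE negb_or negbK => /andP [vS nisv].
have [w wS evw] := outside_neighbour mS vS nisv.
by exists w; rewrite ?inE ?wS // e_sym.
Qed.

Lemma dominating_nonisolated (a b : T) (S : {set T}) :
  e a b -> dominating e S -> exists2 v, v \in S & ~~ isolated v.
Proof.
move=> eab /dominatingP dS.
have [aS|aS] := boolP (a \in S).
  by exists a => //; apply/forallPn; exists b; rewrite eab.
have [u uS eua] := dS a aS.
by exists u => //; apply/forallPn; exists a; rewrite eua.
Qed.

(* A graph with an edge has, besides any minimal dominating set S, a second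
   one: a minimal dominating set inside the complement of S enlarged by the
   isolated vertices cannot be S, which has a non-isolated vertex. *)
Lemma another_minimal_dominating (a b : T) (S : {set T}) :
  e a b -> minimal_dominating e S -> exists2 M, minimal_dominating e M & M != S.
Proof.
move=> eab mS; have [M sMX mM] := exists_minimal_dominating (complement_dominating mS).
exists M => //; apply: contraTneq sMX => ->.
have [v vS nisv] := dominating_nonisolated eab (minimal_dominatingW mS).
by apply/subsetPn; exists v; rewrite // !inE vS (negbTE nisv).
Qed.

(* Lower bound: if G has an edge, D_Gamma(G) is disconnected, as a minimal
   dominating set of size Gamma(G) is isolated there but is not the only
   vertex. *)
Lemma Dk_Gamma_disconnected (a b : T) : e a b -> ~ Dk_connected e (Gamma_dom e).
Proof.
move=> eab conn; have [S mS cardS] := Gamma_dom_attained e.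
have [M mM neMS] := another_minimal_dominating eab mS.
have vS : Dk_vertex e (Gamma_dom e) S.
  by rewrite /Dk_vertex (minimal_dominatingW mS) cardS leqnn.
have vM : Dk_vertex e (Gamma_dom e) M.
  by rewrite /Dk_vertex (minimal_dominatingW mM) Gamma_dom_max.
have /connectP [p pathp eqM] := conn S M vS vM.
case: p pathp eqM => [_ eqM | S' p /= /andP [eSS' _] _]; first by rewrite eqM eqxx in neMS.
have isoS := minimal_dominating_Dk_isolated S' mS (eq_leq (esym cardS)).
by rewrite eSS' in isoS.
Qed.

End LowerBound.

Section UpperBounds.
Variables (T : finType) (e : rel T).

(* First upper bound: for k >= Gamma + gamma every vertex A of D_k(G)
   shrinks to a minimal dominating M, which reaches a minimum dominating set
   D through the superset M u D of size at most Gamma + gamma. *)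
Lemma Dk_connected_Gamma_gamma (k : nat) :
  Gamma_dom e + gamma_dom e <= k -> Dk_connected e k.
Proof.
move=> hk; have [D dD cardD] := gamma_dom_attained e.
apply: (Dk_connected_hub (H := D)) => A /andP [dA kA].
have [M sMA mM] := exists_minimal_dominating dA.
have dM := minimal_dominatingW mM.
apply: connect_trans (connect_down sMA dM kA) _.
apply: (connect_common_superset (U := M :|: D)); rewrite ?subsetUl ?subsetUr //.
rewrite (leq_trans (leq_card_setU M D)) // (leq_trans _ hk) // -cardD.
by rewrite leq_add2r Gamma_dom_max.
Qed.

Hypotheses (e_sym : symmetric e) (e_irr : irreflexive e).

Lemma dominating_setTD2 (x x' y y' : T) :
  e x x' -> x' != y -> e y y' -> y' != x -> dominating e ([set: T] :\ x :\ y).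
Proof.
move=> exx' x'y eyy' y'x; apply/dominatingP => v.
have x'x : x' != x by apply: contraTneq exx' => ->; rewrite e_irr.
have y'y : y' != y by apply: contraTneq eyy' => ->; rewrite e_irr.
rewrite !inE andbT negb_and !negbK => /orP [/eqP ->|/eqP ->].
  by exists y'; [rewrite !inE y'x y'y | rewrite e_sym].
by exists x'; [rewrite !inE x'y x'x | rewrite e_sym].
Qed.

Lemma dominating_setTD1 (x u : T) : e x u -> dominating e ([set: T] :\ x).
Proof.
move=> exu; apply/dominatingP => v; rewrite !inE andbT negbK => /eqP ->.
exists u; last by rewrite e_sym.
by rewrite !inE andbT; apply: contraTneq exu => ->; rewrite e_irr.
Qed.

Lemma cards_setTD1 (x : T) : #|[set: T] :\ x| = #|T| - 1.
Proof. by rewrite -cardsT (cardsD1 x [set: T]) in_setT add1n subn1. Qed.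

Lemma connect_co1 (k : nat) (x y : T) :
  #|T| - 1 <= k -> dominating e ([set: T] :\ x :\ y) ->
  connect (Dk_edge e k) ([set: T] :\ x) ([set: T] :\ y).
Proof.
move=> hk dC; apply: (connect_common_subset (C := [set: T] :\ x :\ y)).
all: rewrite ?cards_setTD1 //.
- exact: subsetDl.
- by apply/subsetP => v; rewrite !inE => /and3P [-> _ _].
Qed.

(* Second upper bound: with two disjoint edges ab and cd, D_k(G) is connected
   for k >= n - 1.  Every vertex A of D_k(G) is V or lies below some V - x
   with x dominated by A; the sets V - c and V - d are joined to V - a, and
   every V - x with x non-isolated is joined to V - c or to V - d. *)
Lemma Dk_connected_n (a b c d : T) (k : nat) :
  e a b -> e c d -> uniq [:: a; b; c; d] -> #|T| - 1 <= k -> Dk_connected e k.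
Proof.
move=> eab ecd + hk; rewrite /= !inE !negb_or.
move=> /and4P [/and3P [ab ac ad] /andP [bc bd] cd _].
pose co x := [set: T] :\ x.
have step x x' y y' :
    e x x' -> x' != y -> e y y' -> y' != x -> connect (Dk_edge e k) (co x) (co y).
  by move=> exx' x'y eyy' y'x; apply: connect_co1 hk (dominating_setTD2 exx' x'y eyy' y'x).
have edc : e d c by rewrite e_sym.
have ca : connect (Dk_edge e k) (co c) (co a) by apply: step ecd _ eab bc; rewrite eq_sym.
have da : connect (Dk_edge e k) (co d) (co a) by apply: step edc _ eab bd; rewrite eq_sym.
have toa x u : e x u -> connect (Dk_edge e k) (co x) (co a).
  move=> exu; have [->|xc] := eqVneq x c; first exact: ca.
  have [->|xd] := eqVneq x d; first exact: da.
  have [uc|uc] := eqVneq u c.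
    by apply: connect_trans da; apply: step exu _ edc _; rewrite ?uc // eq_sym.
  by apply: connect_trans ca; apply: step exu uc ecd _; rewrite eq_sym.
apply: (Dk_connected_hub (H := co a)) => A /andP [dA kA].
have [sTA | /subsetPn [x _ xA]] := boolP ([set: T] \subset A).
  exact: connect_down (subset_trans (subsetT _) sTA) (dominating_setTD1 eab) kA.
have sAx : A \subset co x.
  by apply/subsetP => v vA; rewrite !inE andbT; apply: contraNneq xA => <-.
have [u uA eux] := dominatingP _ _ dA x xA.
apply: connect_trans (toa x u _); last by rewrite e_sym.
by rewrite Dk_connect_sym connect_down // cards_setTD1.
Qed.

End UpperBounds.

Lemma least_witness (P : nat -> Prop) (n : nat) :
  P n -> exists m, P m /\ forall k, P k -> m <= k.
Proof.
have [N] := ubnP n; elim: N n => // N IH n /ltnSE nN Pn.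
have [[k kn Pk]|no_smaller] := classic (exists2 k, k < n & P k).
  exact: IH k (leq_trans kn nN) Pk.
exists n; split => // k Pk; rewrite leqNgt; apply/negP => kn.
by apply: no_smaller; exists k.
Qed.

Theorem corollary6 (T : finType) (e : rel T)
  (e_sym : symmetric e) (e_irr : irreflexive e)
  (two_disj : exists a b c d : T,
     [/\ e a b, e c d & uniq [:: a; b; c; d]]) :
  (exists d, is_d0 e d) /\
  (forall d, is_d0 e d ->
     (Gamma_dom e).+1 <= d /\ d <= minn (#|T| - 1) (Gamma_dom e + gamma_dom e)).
Proof.
have [a [b [c [d [eab ecd abcd]]]]] := two_disj.
pose m0 := minn (#|T| - 1) (Gamma_dom e + gamma_dom e).
have gamma_m0 : gamma_dom e <= m0.
  rewrite leq_min leq_addl andbT -(cards_setTD1 a).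
  exact: gamma_dom_min (dominating_setTD1 e_sym e_irr eab).
have d0_m0 : d0_prop e m0.
  split=> // k; rewrite geq_min => /orP [hk | hk].
    exact (Dk_connected_n e_sym e_irr eab ecd abcd hk).
  exact (Dk_connected_Gamma_gamma hk).
split; first by have [m [d0_m m_least]] := least_witness d0_m0; exists m.
move=> d0 [[_ conn] d0_least]; split; last exact: d0_least m0 d0_m0.
rewrite ltnNge; apply/negP => d0_Gamma.
exact (Dk_Gamma_disconnected e_sym e_irr eab (conn _ d0_Gamma)).
Qed.
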